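(* Let $d_1,d_2\ge1$ be integers, not both equal to $1$, and $s_1,s_2$ real numbers, and define $$h_a(x_1,x_2)=\int_{-1}^1(1+x_1z)^{d_1}(1+x_2z)^{d_2}\big(x_a(x_as_a-1)(1-z^2)+z(1-x_a^2)\big)\,dz,\qquad a=1,2.$$ If $s_1<1$ and $s_2<1$, then there exist $x_1,x_2\in(0,1)$ with $h_1(x_1,x_2)=0=h_2(x_1,x_2)$. *)

From Stdlib Require Import Reals.
From Coquelicot Require Import Coquelicot.
Open Scope R_scope.

Definition h_integrand (d1 d2 : nat) (x1 x2 xa sa : R) (z : R) : R :=
  (1 + x1 * z) ^ d1 * (1 + x2 * z) ^ d2 *
  (xa * (xa * sa - 1) * (1 - z ^ 2) + z * (1 - xa ^ 2)).

Definition h1 (d1 d2 : nat) (s1 : R) (x1 x2 : R) : R :=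
  RInt (h_integrand d1 d2 x1 x2 x1 s1) (-1) 1.

Definition h2 (d1 d2 : nat) (s2 : R) (x1 x2 : R) : R :=
  RInt (h_integrand d1 d2 x1 x2 x2 s2) (-1) 1.

From Stdlib Require Import Reals Lra Lia Psatz.
From Coquelicot Require Import Coquelicot.
Open Scope R_scope.

(* For t > 0 let x = x_of_t s t be the positive root of (t - s) x^2 + x - t = 0, i.e. of
   x (x s - 1) = - t (1 - x^2).  Taking x_a = x_of_t s_a t turns the integrand of h_a into
   (1 - x_a^2) times the common kernel (1 + x1 z)^d1 (1 + x2 z)^d2 (z - t (1 - z^2)), so it
   suffices to find t > 0 where phi t, the integral of this kernel over [-1, 1], vanishes.
   phi is continuous; for small t we have x_a ~ t and phi t ~ (2/3) (d1 + d2) t - (4/3) t > 0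
   since d1 + d2 >= 3, whereas phi t < 0 once t >= 2^(d1 + d2). *)

Lemma pow_le_quadratic (n : nat) (u : R) : -1 <= u <= 0 ->
  (1 + u) ^ n <= 1 + INR n * u + INR n ^ 2 * u ^ 2.
Proof.
  intros Hu. induction n as [|n IH]; [simpl; lra|].
  rewrite S_INR. simpl pow. simpl in IH.
  pose proof (pos_INR n).
  assert (Hu3 : 0 <= INR n * INR n * (- u) * (u * u)) by
    (apply Rmult_le_pos; [apply Rmult_le_pos; [apply Rmult_le_pos|]|]; nra).
  apply Rle_trans with ((1 + u) * (1 + INR n * u + INR n * (INR n * 1) * (u * (u * 1)))).
  - apply Rmult_le_compat_l; lra.
  - nra.
Qed.

Lemma pow_le_chord (n : nat) (X : R) : 0 <= X <= 1 -> (1 + X) ^ n <= 1 + (2 ^ n - 1) * X.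
Proof.
  intros HX. induction n as [|n IH]; [simpl; lra|].
  simpl pow. pose proof (pow_R1_Rle 2 n ltac:(lra)).
  assert ((2 ^ n - 1) * (X * X) <= (2 ^ n - 1) * X) by (apply Rmult_le_compat_l; nra).
  apply Rle_trans with ((1 + X) * (1 + (2 ^ n - 1) * X)); [apply Rmult_le_compat_l; lra | nra].
Qed.

Lemma pow_mul_id_ge (n : nat) (m z : R) : 0 <= m <= 1 -> -1 <= z <= 1 ->
  z + INR n * m * z ^ 2 - INR n ^ 2 * m ^ 2 <= (1 + m * z) ^ n * z.
Proof.
  intros Hm Hz. pose proof (pos_INR n).
  destruct (Rle_lt_dec 0 z) as [Hz0 | Hz0].
  - pose proof (Rle_pow_lin (m * z) n ltac:(nra)).
    assert (0 <= INR n ^ 2 * m ^ 2) by (apply Rmult_le_pos; apply pow2_ge_0).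
    nra.
  - pose proof (pow_le_quadratic n (m * z) ltac:(nra)) as Hup.
    assert (Hz3 : - 1 <= z ^ 3) by nra.
    assert (0 <= INR n ^ 2 * m ^ 2) by (apply Rmult_le_pos; apply pow2_ge_0).
    apply Rle_trans with ((1 + INR n * (m * z) + INR n ^ 2 * (m * z) ^ 2) * z); nra.
Qed.

Lemma pow_mul_le (a a' b b' : R) (m n : nat) :
  0 <= a <= a' -> 0 <= b <= b' -> a ^ m * b ^ n <= a' ^ m * b' ^ n.
Proof.
  intros Ha Hb.
  apply Rmult_le_compat; try (apply pow_le; lra); apply pow_incr; lra.
Qed.

Lemma is_RInt_quadratic (a b c u v : R) :
  is_RInt (fun z => a + b * z + c * z ^ 2) u v
    (a * (v - u) + b * (v ^ 2 - u ^ 2) / 2 + c * (v ^ 3 - u ^ 3) / 3).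
Proof.
  set (F := fun z => a * z + b * z ^ 2 / 2 + c * z ^ 3 / 3).
  replace (a * (v - u) + b * (v ^ 2 - u ^ 2) / 2 + c * (v ^ 3 - u ^ 3) / 3)
    with (minus (F v) (F u)) by (unfold F, minus, plus, opp; simpl; field).
  apply (@is_RInt_derive R_CompleteNormedModule).
  - intros z _. unfold F. auto_derive; [exact I | field].
  - intros z _. apply (@ex_derive_continuous R_AbsRing R_NormedModule). auto_derive. exact I.
Qed.

Lemma RInt_param_continuity (f : R -> R -> R) (a b t0 : R) :
  a <= b -> (forall t, ex_RInt (fun z => f z t) a b) ->
  (forall z, a <= z <= b -> continuity_2d_pt f z t0) ->
  continuity_pt (fun t => RInt (fun z => f z t) a b) t0.
Proof.
  intros Hab Hint Hcont eps Heps.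
  assert (Heps' : 0 < eps / (b - a + 1)) by (apply Rdiv_lt_0_compat; lra).
  destruct (uniform_continuity_2d_1d f a b t0 Hcont (mkposreal _ Heps')) as [delta Hdelta].
  exists delta. split; [apply cond_pos|].
  intros t [_ Htt0]. simpl in *. unfold R_dist in *.
  rewrite <- (RInt_minus (V := R_CompleteNormedModule)) by apply Hint.
  apply Rle_lt_trans with ((b - a) * (eps / (b - a + 1))).
  - apply abs_RInt_le_const; [exact Hab | apply (ex_RInt_minus (V := R_NormedModule)); apply Hint |].
    intros z Hz. left.
    pose proof (cond_pos delta). pose proof (proj1 (Rabs_lt_between' _ _ _) Htt0).
    apply Hdelta; try lra.
    rewrite Rminus_diag, Rabs_R0. lra.
  - apply Rmult_lt_reg_r with (b - a + 1); [lra|].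
    field_simplify; nra.
Qed.

(* The quadratic formula, rationalized so that it stays valid at t = s. *)
Definition x_of_t (s t : R) : R := 2 * t / (1 + sqrt (1 + 4 * t * (t - s))).

Definition weight (d1 d2 : nat) (x1 x2 z : R) : R := (1 + x1 * z) ^ d1 * (1 + x2 * z) ^ d2.

Definition kernel (d1 d2 : nat) (x1 x2 t z : R) : R :=
  weight d1 d2 x1 x2 z * (z - t * (1 - z ^ 2)).

Definition phi (d1 d2 : nat) (s1 s2 t : R) : R :=
  RInt (kernel d1 d2 (x_of_t s1 t) (x_of_t s2 t) t) (-1) 1.

Section XOfT.

Variables s t : R.
Hypotheses (Hs : s < 1) (Ht : 0 < t).

Let discr_pos : 0 < 1 + 4 * t * (t - s).
Proof. pose proof (pow2_ge_0 (2 * t - 1)). nra. Qed.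

Lemma x_of_t_root : (t - s) * x_of_t s t ^ 2 + x_of_t s t - t = 0.
Proof.
  unfold x_of_t.
  set (q := sqrt (1 + 4 * t * (t - s))).
  assert (Hq0 : 0 <= q) by apply sqrt_pos.
  assert (Hq2 : q * q = 1 + 4 * t * (t - s)) by exact (sqrt_sqrt _ (Rlt_le _ _ discr_pos)).
  set (x := 2 * t / (1 + q)).
  assert (Hx : x * (1 + q) = 2 * t) by (unfold x; field; lra).
  apply (Rmult_eq_reg_r ((1 + q) ^ 2)); [|nra].
  replace (((t - s) * x ^ 2 + x - t) * (1 + q) ^ 2)
    with ((t - s) * (x * (1 + q)) ^ 2 + x * (1 + q) * (1 + q) - t * (1 + q) ^ 2) by ring.
  rewrite Hx. nra.
Qed.

Lemma x_of_t_bounds : 0 < x_of_t s t < 1 /\ x_of_t s t <= 2 * t.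
Proof.
  unfold x_of_t.
  set (q := sqrt (1 + 4 * t * (t - s))).
  assert (Hq0 : 0 <= q) by apply sqrt_pos.
  assert (Hq2 : q * q = 1 + 4 * t * (t - s)) by exact (sqrt_sqrt _ (Rlt_le _ _ discr_pos)).
  assert (Hq : 2 * t < 1 + q) by (pose proof (pow2_ge_0 (2 * t - 1)); nra).
  split; [split|].
  - apply Rdiv_lt_0_compat; lra.
  - apply Rlt_div_l; lra.
  - apply Rmult_le_reg_r with (1 + q); [lra|].
    unfold Rdiv; rewrite Rmult_assoc, Rinv_l by lra. nra.
Qed.

Lemma x_of_t_ge : t - 4 * t ^ 2 * (t + Rabs s) <= x_of_t s t.
Proof.
  pose proof x_of_t_root as Hroot. destruct x_of_t_bounds as [[Hx0 _] Hx2].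
  assert (Hsq : x_of_t s t ^ 2 <= 4 * t ^ 2) by nra.
  pose proof (Rabs_maj2 s). pose proof (Rabs_pos s).
  nra.
Qed.

End XOfT.

Lemma x_of_t_continuity s t : continuity_pt (x_of_t s) t.
Proof.
  apply continuity_pt_filterlim. unfold x_of_t.
  pose proof (sqrt_pos (1 + 4 * t * (t - s))).
  apply (continuous_mult (fun t => 2 * t) (fun t => / (1 + sqrt (1 + 4 * t * (t - s))))).
  - apply (continuous_mult (fun _ => 2) (fun t => t)); [apply continuous_const | apply continuous_id].
  - apply continuous_Rinv_comp; [|lra].
    apply (continuous_plus (fun _ => 1) (fun t => sqrt (1 + 4 * t * (t - s))));
      [apply continuous_const|].
    apply continuous_sqrt_comp.
    apply (@ex_derive_continuous R_AbsRing R_NormedModule). auto_derive. exact I.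
Qed.

Lemma h_integrand_factor d1 d2 x1 x2 xa sa t z :
  (t - sa) * xa ^ 2 + xa - t = 0 ->
  h_integrand d1 d2 x1 x2 xa sa z = (1 - xa ^ 2) * kernel d1 d2 x1 x2 t z.
Proof.
  intros Hroot. unfold h_integrand, kernel, weight.
  replace (xa * (xa * sa - 1)) with (- t * (1 - xa ^ 2)) by nra.
  ring.
Qed.

Lemma kernel_ex_RInt d1 d2 x1 x2 t a b : ex_RInt (kernel d1 d2 x1 x2 t) a b.
Proof.
  apply (@ex_RInt_continuous R_CompleteNormedModule). intros z _.
  apply (@ex_derive_continuous R_AbsRing R_NormedModule).
  unfold kernel, weight. auto_derive. exact I.
Qed.

Lemma RInt_h_integrand d1 d2 x1 x2 xa sa t :
  (t - sa) * xa ^ 2 + xa - t = 0 ->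
  RInt (h_integrand d1 d2 x1 x2 xa sa) (-1) 1
  = (1 - xa ^ 2) * RInt (kernel d1 d2 x1 x2 t) (-1) 1.
Proof.
  intros Hroot.
  rewrite (RInt_ext _ (fun z => scal (1 - xa ^ 2) (kernel d1 d2 x1 x2 t z))).
  - apply (@RInt_scal R_CompleteNormedModule), kernel_ex_RInt.
  - intros z _. exact (h_integrand_factor d1 d2 x1 x2 xa sa t z Hroot).
Qed.

Lemma kernel_continuity_2d d1 d2 s1 s2 z t :
  continuity_2d_pt (fun z t => kernel d1 d2 (x_of_t s1 t) (x_of_t s2 t) t z) z t.
Proof.
  assert (Hlin : forall s, continuity_2d_pt (fun z t => 1 + x_of_t s t * z) z t).
  { intros s. apply continuity_2d_pt_plus; [apply continuity_2d_pt_const|].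
    apply continuity_2d_pt_mult; [|apply continuity_2d_pt_id1].
    apply (continuity_1d_2d_pt_comp (x_of_t s) (fun _ t => t)).
    - apply x_of_t_continuity.
    - apply continuity_2d_pt_id2. }
  assert (Hpow : forall s n, continuity_2d_pt (fun z t => (1 + x_of_t s t * z) ^ n) z t).
  { intros s n. apply (continuity_1d_2d_pt_comp (fun y => y ^ n) (fun z t => 1 + x_of_t s t * z)).
    - apply derivable_continuous_pt, derivable_pt_pow.
    - apply Hlin. }
  unfold kernel, weight.
  apply continuity_2d_pt_mult; [apply continuity_2d_pt_mult; apply Hpow|].
  apply continuity_2d_pt_minus; [apply continuity_2d_pt_id1|].
  apply continuity_2d_pt_mult; [apply continuity_2d_pt_id2|].
  apply continuity_2d_pt_minus; [apply continuity_2d_pt_const|].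
  apply (continuity_1d_2d_pt_comp (fun y => y ^ 2) (fun z _ => z)).
  - apply derivable_continuous_pt, derivable_pt_pow.
  - apply continuity_2d_pt_id1.
Qed.

Lemma phi_continuity d1 d2 s1 s2 : continuity (phi d1 d2 s1 s2).
Proof.
  intros t. unfold phi.
  apply (RInt_param_continuity (fun z t => kernel d1 d2 (x_of_t s1 t) (x_of_t s2 t) t z)); [lra | |].
  - intros; apply kernel_ex_RInt.
  - intros z _; apply kernel_continuity_2d.
Qed.

Section Weight.

Variables (d1 d2 : nat) (x1 x2 z : R).

Lemma weight_nonneg : 0 <= x1 <= 1 -> 0 <= x2 <= 1 -> -1 <= z <= 1 -> 0 <= weight d1 d2 x1 x2 z.
Proof. intros. unfold weight. apply Rmult_le_pos; apply pow_le; nra. Qed.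

Lemma weight_ge_1 : 0 <= x1 -> 0 <= x2 -> 0 <= z -> 1 <= weight d1 d2 x1 x2 z.
Proof.
  intros. unfold weight.
  apply Rle_trans with (1 ^ d1 * 1 ^ d2); [rewrite !pow1; lra | apply pow_mul_le; nra].
Qed.

Lemma weight_le (X : R) : 0 <= x1 <= X -> 0 <= x2 <= X -> X <= 1 -> -1 <= z <= 1 ->
  weight d1 d2 x1 x2 z <= (1 + X) ^ (d1 + d2).
Proof. intros. unfold weight. rewrite pow_add. apply pow_mul_le; nra. Qed.

(* For z < 0 the comparison of the weights reverses, and so does multiplication by z. *)
Lemma weight_mul_id_ge (m : R) : 0 <= m <= x1 -> m <= x2 -> x1 <= 1 -> x2 <= 1 -> -1 <= z <= 1 ->
  (1 + m * z) ^ (d1 + d2) * z <= weight d1 d2 x1 x2 z * z.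
Proof.
  intros. unfold weight. rewrite pow_add.
  destruct (Rle_lt_dec 0 z).
  - apply Rmult_le_compat_r; [lra|]. apply pow_mul_le; nra.
  - assert ((1 + x1 * z) ^ d1 * (1 + x2 * z) ^ d2 <= (1 + m * z) ^ d1 * (1 + m * z) ^ d2)
      by (apply pow_mul_le; nra).
    nra.
Qed.

End Weight.

Section KernelBounds.

Variables (d1 d2 : nat) (x1 x2 t : R).
Hypotheses (Hx1 : 0 <= x1 <= 1) (Hx2 : 0 <= x2 <= 1) (Ht : 0 <= t).

Lemma kernel_ge (m X z : R) : 0 <= m <= x1 -> m <= x2 -> x1 <= X -> x2 <= X -> X <= 1 ->
  -1 <= z <= 1 ->
  (- INR (d1 + d2) ^ 2 * m ^ 2 - t * (1 + (2 ^ (d1 + d2) - 1) * X)) + 1 * z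
    + (INR (d1 + d2) * m + t * (1 + (2 ^ (d1 + d2) - 1) * X)) * z ^ 2
  <= kernel d1 d2 x1 x2 t z.
Proof.
  intros Hm Hm2 HX1 HX2 HX Hz. unfold kernel.
  pose proof (weight_mul_id_ge d1 d2 x1 x2 z m Hm Hm2 (proj2 Hx1) (proj2 Hx2) Hz) as Hwz.
  pose proof (pow_mul_id_ge (d1 + d2) m z ltac:(lra) Hz) as Hpz.
  pose proof (weight_le d1 d2 x1 x2 z X ltac:(lra) ltac:(lra) HX Hz) as Hw.
  pose proof (pow_le_chord (d1 + d2) X ltac:(lra)) as Hchord.
  assert (H1z : 0 <= 1 - z ^ 2) by nra.
  assert (Hw' : t * (weight d1 d2 x1 x2 z * (1 - z ^ 2))
              <= t * ((1 + (2 ^ (d1 + d2) - 1) * X) * (1 - z ^ 2)))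
    by (apply Rmult_le_compat_l; [lra | apply Rmult_le_compat_r; lra]).
  nra.
Qed.

Lemma RInt_kernel_ge (m X : R) : 0 <= m <= x1 -> m <= x2 -> x1 <= X -> x2 <= X -> X <= 1 ->
  2 * INR (d1 + d2) * m / 3 - 2 * INR (d1 + d2) ^ 2 * m ^ 2
    - 4 * t * (1 + (2 ^ (d1 + d2) - 1) * X) / 3
  <= RInt (kernel d1 d2 x1 x2 t) (-1) 1.
Proof.
  intros Hm Hm2 HX1 HX2 HX.
  set (a := - INR (d1 + d2) ^ 2 * m ^ 2 - t * (1 + (2 ^ (d1 + d2) - 1) * X)).
  set (c := INR (d1 + d2) * m + t * (1 + (2 ^ (d1 + d2) - 1) * X)).
  pose proof (is_RInt_quadratic a 1 c (-1) 1) as Hq.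
  apply Rle_trans with (a * (1 - -1) + 1 * (1 ^ 2 - (-1) ^ 2) / 2 + c * (1 ^ 3 - (-1) ^ 3) / 3).
  { unfold a, c. apply Req_le. field. }
  rewrite <- (is_RInt_unique _ _ _ _ Hq).
  apply RInt_le; [lra | eexists; exact Hq | apply kernel_ex_RInt |].
  intros z Hz. apply kernel_ge; lra.
Qed.

Lemma kernel_nonpos (z : R) : -1 <= z <= 0 -> kernel d1 d2 x1 x2 t z <= 0.
Proof.
  intros Hz. unfold kernel.
  pose proof (weight_nonneg d1 d2 x1 x2 z Hx1 Hx2 ltac:(lra)).
  assert (0 <= t * (1 - z ^ 2)) by (apply Rmult_le_pos; nra).
  nra.
Qed.

Lemma kernel_le (z : R) : 0 <= z <= 1 ->
  kernel d1 d2 x1 x2 t z <= - t + 2 ^ (d1 + d2) * z + t * z ^ 2.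
Proof.
  intros Hz. unfold kernel.
  pose proof (weight_ge_1 d1 d2 x1 x2 z (proj1 Hx1) (proj1 Hx2) (proj1 Hz)).
  pose proof (weight_le d1 d2 x1 x2 z 1 Hx1 Hx2 (Rle_refl 1) ltac:(lra)) as Hw.
  replace (1 + 1) with 2 in Hw by ring.
  assert (0 <= t * (1 - z ^ 2)) by (apply Rmult_le_pos; nra).
  nra.
Qed.

Lemma RInt_kernel_lt_0 : 2 ^ (d1 + d2) <= t -> RInt (kernel d1 d2 x1 x2 t) (-1) 1 < 0.
Proof.
  intros Htl.
  rewrite <- (RInt_Chasles (V := R_CompleteNormedModule) _ (-1) 0 1) by apply kernel_ex_RInt.
  assert (Hneg : RInt (kernel d1 d2 x1 x2 t) (-1) 0 <= 0).
  { apply Rle_trans with (RInt (fun _ => 0) (-1) 0).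
    - apply RInt_le; [lra | apply kernel_ex_RInt | apply ex_RInt_const |].
      intros z Hz. apply kernel_nonpos; lra.
    - rewrite RInt_const. unfold scal; simpl; unfold mult; simpl. lra. }
  pose proof (is_RInt_quadratic (- t) (2 ^ (d1 + d2)) t 0 1) as Hq.
  assert (Hpos : RInt (kernel d1 d2 x1 x2 t) 0 1
                 <= - t * (1 - 0) + 2 ^ (d1 + d2) * (1 ^ 2 - 0 ^ 2) / 2 + t * (1 ^ 3 - 0 ^ 3) / 3).
  { rewrite <- (is_RInt_unique _ _ _ _ Hq).
    apply RInt_le; [lra | apply kernel_ex_RInt | eexists; exact Hq |].
    intros z Hz. apply kernel_le; lra. }
  unfold plus; simpl.
  pose proof (pow_lt 2 (d1 + d2) ltac:(lra)).
  lra.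
Qed.

End KernelBounds.

Lemma phi_pos_near_0 d1 d2 s1 s2 t : (3 <= d1 + d2)%nat -> s1 < 1 -> s2 < 1 -> 0 < t ->
  t * (12 * (1 + Rabs s1 + Rabs s2 + INR (d1 + d2) + 2 ^ (d1 + d2))) <= 1 ->
  0 < phi d1 d2 s1 s2 t.
Proof.
  intros Hd Hs1 Hs2 Ht Hsmall.
  set (n := INR (d1 + d2)) in *. set (p := 2 ^ (d1 + d2)) in *.
  set (sigma := Rabs s1 + Rabs s2).
  assert (Hn : 3 <= n) by (unfold n; replace 3 with (INR 3) by (simpl; ring); apply le_INR; exact Hd).
  assert (Hp : 1 <= p) by (apply pow_R1_Rle; lra).
  pose proof (Rabs_pos s1). pose proof (Rabs_pos s2).
  assert (Hsig0 : 0 <= sigma) by (unfold sigma; lra).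
  destruct (x_of_t_bounds s1 t Hs1 Ht) as [Hx1 Hx1t].
  destruct (x_of_t_bounds s2 t Hs2 Ht) as [Hx2 Hx2t].
  pose proof (x_of_t_ge s1 t Hs1 Ht). pose proof (x_of_t_ge s2 t Hs2 Ht).
  set (m := t - 4 * t ^ 2 * (t + sigma)).
  assert (Ht1 : 12 * t * (1 + sigma) + 12 * t * (n + p) <= 1) by (unfold sigma; lra).
  assert (Htnp : 0 <= 12 * t * (n + p)) by (apply Rmult_le_pos; lra).
  assert (Ht12 : 12 * t <= 1) by (assert (0 <= t * sigma) by (apply Rmult_le_pos; lra); lra).
  assert (Hsig : 4 * t * (t + sigma) <= 1 / 3) by (assert (0 <= t * (1 - t)) by nra; nra).
  assert (Hm0 : 0 <= m <= t).
  { assert (0 <= t * (1 - 4 * t * (t + sigma))) by (apply Rmult_le_pos; lra).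
    assert (0 <= t * (4 * t * (t + sigma))) by (apply Rmult_le_pos; nra).
    unfold m; split; nra. }
  assert (Hm1 : m <= x_of_t s1 t) by (unfold m, sigma in *; nra).
  assert (Hm2 : m <= x_of_t s2 t) by (unfold m, sigma in *; nra).
  unfold phi.
  eapply Rlt_le_trans;
    [| apply (RInt_kernel_ge d1 d2 (x_of_t s1 t) (x_of_t s2 t) t
                ltac:(lra) ltac:(lra) ltac:(lra) m (2 * t)); lra].
  fold n p.
  assert (Hlin : 2 * m * (1 - 3 * n * t) <= 2 * n * m / 3 - 2 * n ^ 2 * m ^ 2).
  { assert (H3nt : 0 <= 1 - 3 * n * t) by nra.
    assert (n * (n * m * m) <= n * (n * m * t))
      by (apply Rmult_le_compat_l; [lra | apply Rmult_le_compat_l; nra]).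
    assert (2 * m * (1 - 3 * n * t) <= 2 * n * m / 3 * (1 - 3 * n * t))
      by (apply Rmult_le_compat_r; nra).
    nra. }
  assert (Hm : 2 * t * (1 - 4 * t * (t + sigma) - 3 * n * t) <= 2 * m * (1 - 3 * n * t)).
  { assert (0 <= t * (4 * t * (t + sigma)) * (n * t))
      by (apply Rmult_le_pos; [apply Rmult_le_pos|]; nra).
    unfold m. nra. }
  nra.
Qed.

Lemma phi_neg_large d1 d2 s1 s2 t : s1 < 1 -> s2 < 1 -> 2 ^ (d1 + d2) <= t ->
  phi d1 d2 s1 s2 t < 0.
Proof.
  intros Hs1 Hs2 Ht.
  assert (Ht0 : 0 < t) by (pose proof (pow_lt 2 (d1 + d2) ltac:(lra)); lra).
  destruct (x_of_t_bounds s1 t Hs1 Ht0) as [Hx1 _].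
  destruct (x_of_t_bounds s2 t Hs2 Ht0) as [Hx2 _].
  apply RInt_kernel_lt_0; lra.
Qed.

Lemma h_zero_of_phi_zero d1 d2 s1 s2 t : s1 < 1 -> s2 < 1 -> 0 < t -> phi d1 d2 s1 s2 t = 0 ->
  h1 d1 d2 s1 (x_of_t s1 t) (x_of_t s2 t) = 0 /\ h2 d1 d2 s2 (x_of_t s1 t) (x_of_t s2 t) = 0.
Proof.
  intros Hs1 Hs2 Ht Hphi. unfold phi in Hphi. unfold h1, h2.
  rewrite !(RInt_h_integrand _ _ _ _ _ _ t) by (apply x_of_t_root; assumption).
  rewrite Hphi. split; ring.
Qed.

Theorem lemma3p6 (d1 d2 : nat) (s1 s2 : R) :
  (1 <= d1)%nat -> (1 <= d2)%nat -> ~ (d1 = 1%nat /\ d2 = 1%nat) ->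
  s1 < 1 -> s2 < 1 ->
  exists x1 x2 : R, 0 < x1 < 1 /\ 0 < x2 < 1 /\
    h1 d1 d2 s1 x1 x2 = 0 /\ h2 d1 d2 s2 x1 x2 = 0.
Proof.
  intros Hd1 Hd2 Hd Hs1 Hs2.
  set (C := 12 * (1 + Rabs s1 + Rabs s2 + INR (d1 + d2) + 2 ^ (d1 + d2))).
  assert (HC : 0 < C).
  { pose proof (Rabs_pos s1). pose proof (Rabs_pos s2). pose proof (pos_INR (d1 + d2)).
    pose proof (pow_lt 2 (d1 + d2) ltac:(lra)). unfold C. lra. }
  assert (Hpos : 0 < phi d1 d2 s1 s2 (1 / C)).
  { apply phi_pos_near_0; try lia; try assumption.
    - apply Rdiv_lt_0_compat; lra.
    - fold C. apply Req_le. field. lra. }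
  pose proof (phi_neg_large d1 d2 s1 s2 _ Hs1 Hs2 (Rle_refl _)) as Hneg.
  destruct (IVT_gen (phi d1 d2 s1 s2) (1 / C) (2 ^ (d1 + d2)) 0 (phi_continuity d1 d2 s1 s2))
    as [t [Ht Hphi]].
  { rewrite Rmin_right, Rmax_left; lra. }
  assert (Ht0 : 0 < t).
  { pose proof (pow_lt 2 (d1 + d2) ltac:(lra)).
    assert (0 < 1 / C) by (apply Rdiv_lt_0_compat; lra).
    apply Rlt_le_trans with (Rmin (1 / C) (2 ^ (d1 + d2))); [apply Rmin_glb_lt|]; lra. }
  exists (x_of_t s1 t), (x_of_t s2 t).
  destruct (x_of_t_bounds s1 t Hs1 Ht0) as [Hx1 _].
  destruct (x_of_t_bounds s2 t Hs2 Ht0) as [Hx2 _].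
  destruct (h_zero_of_phi_zero d1 d2 s1 s2 t Hs1 Hs2 Ht0 Hphi).
  repeat split; tauto.
Qed.
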